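(* If $(T,\mu,\mathcal{A})\in\mathcal{T}$ is $\alpha$-mixing, then $T$ is exact with respect to $\mu$, i.e. $\bigcap_{n\ge0}T^{-n}\mathcal{B}=\{\emptyset,X\}$ modulo $\mu$ (and hence $T$ has positive entropy).
   Context: Let $X=[0,1]$, $\mathcal{B}$ its Borel $\sigma$-algebra, $\lambda$ Lebesgue measure. A partition of $[0,1]$ is a finite or countable family of intervals with nonempty pairwise disjoint interiors whose union is $[0,1]$ up to a $\lambda$-null set. The class $\mathcal{T}$ consists of triples $(T,\mu,\mathcal{A})$ where $\mu$ is a Borel probability measure on $[0,1]$ with $\frac1c\mu(A)\le\lambda(A)\le c\mu(A)$ for all $A\in\mathcal{B}$ for some $c\ge1$, $T:[0,1]\to[0,1]$ is measurable, $\mu$-preserving and ergodic, and $\mathcal{A}$ is a partition of $[0,1]$ such that: $T|_{\mathrm{int}(I)}$ is continuous and strictly monotone for each $I\in\mathcal{A}$; $\bigvee_{j\ge0}T^{-j}\sigma(\mathcal{A})=\mathcal{B}$ mod $\lambda$; and $H(\mathcal{A})=-\sum_{I\in\mathcal{A}}\mu(I)\log\mu(I)<\infty$. Write $\mathcal{A}^l=\bigvee_{j=0}^{l-1}T^{-j}\mathcal{A}$. $(T,\mu,\mathcal{A})\in\mathcal{T}$ is $\alpha$-mixing if there are nonnegative reals $\alpha(n)\to0$ such that for every $l\in\mathbb{N}$, every integer $n\ge0$, every $A\in\sigma(\mathcal{A}^l)$ and every $B\in\mathcal{B}$: $|\mu(A\cap T^{-(n+l)}B)-\mu(A)\mu(B)|\le\alpha(n)$.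 *)

(* X = [0,1] is represented as the subset
   I01 of an abstract R : realType, with the Borel sigma-algebra of R
   (measurableTypeR R) and Lebesgue measure (lebesgue_measure). *)
From HB Require Import structures.
From mathcomp Require Import all_boot all_order all_algebra.
From mathcomp Require Import all_classical all_reals all_analysis.
Set Implicit Arguments. Unset Strict Implicit. Unset Printing Implicit Defensive.
Import Order.TTheory GRing.Theory Num.Theory.
Import numFieldNormedType.Exports.
Local Open Scope classical_set_scope.
Local Open Scope ring_scope.

Section Defs.
Variable R : realType.
Local Notation RB := (measurableTypeR R).
Local Notation lam := (@lebesgue_measure R).

Definition I01 : set RB := [set x : RB | 0 <= x <= 1].

Definition borel01 (B : set RB) : Prop := measurable B /\ B `<=` I01.

Definition preimg (T : RB -> RB) (n : nat) (B : set RB) : set RB :=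
  I01 `&` (iter n T) @^-1` B.

(* the partition A = {[set` I k] | k in K}, a finite or countable family of
   intervals indexed by K : set nat *)
Definition is_partition (K : set nat) (I : nat -> interval R) : Prop :=
  [/\ forall k, K k -> [set` I k] `<=` I01,
      forall k, K k -> interior [set` I k] !=set0,
      forall j k, K j -> K k -> j <> k ->
        interior [set` I j] `&` interior [set` I k] = set0
    & lam (I01 `\` \bigcup_(k in K) [set` I k]) = 0%E].

Definition sigmaA (K : set nat) (I : nat -> interval R) : set (set RB) :=
  <<s I01, [set [set` I k] | k in K] >>.

Definition join_all (T : RB -> RB) (K : set nat) (I : nat -> interval R)
  : set (set RB) :=
  <<s I01, \bigcup_(j in [set: nat]) [set preimg T j A | A in sigmaA K I] >>.

(* the elements of the partition A^l = \bigvee_{j=0}^{l-1} T^{-j} A *)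
Definition cylinders (T : RB -> RB) (K : set nat) (I : nat -> interval R)
  (l : nat) : set (set RB) :=
  [set C | exists w : nat -> nat, (forall j, (j < l)%N -> K (w j)) /\
     C = I01 `&` \bigcap_(j in [set j : nat | (j < l)%N]) preimg T j [set` I (w j)]].

Definition sigmaAl (T : RB -> RB) (K : set nat) (I : nat -> interval R)
  (l : nat) : set (set RB) := <<s I01, cylinders T K I l >>.

Definition ent (x : R) : R := if x == 0 then 0 else - (x * ln x).

Definition in_classT (T : RB -> RB) (mu : {measure set RB -> \bar R})
  (K : set nat) (I : nat -> interval R) : Prop :=
  [/\
      mu I01 = 1%E /\ mu (~` I01) = 0%E,
      exists c : R, 1 <= c /\ forall A, borel01 A ->
        ((c^-1)%:E * mu A <= lam A)%E /\ (lam A <= c%:E * mu A)%E,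
      [/\ (forall x, I01 x -> I01 (T x)),
          measurable_fun I01 T,
          (forall B, borel01 B -> mu (preimg T 1 B) = mu B)
        & (forall B, borel01 B -> preimg T 1 B = B -> mu B = 0%E \/ mu B = 1%E)],
      is_partition K I &
      [/\
          (forall k, K k -> {within interior [set` I k], continuous T} /\
             ((forall x y, interior [set` I k] x -> interior [set` I k] y ->
                 x < y -> T x < T y) \/
              (forall x y, interior [set` I k] x -> interior [set` I k] y ->
                 x < y -> T y < T x))),
          (forall B, borel01 B -> exists C, join_all T K I C /\
             lam ((B `\` C) `|` (C `\` B)) = 0%E)
        &
          (\esum_(k in K) (ent (fine (mu [set` I k])))%:E < +oo)%E]].

Definition alpha_mixing (T : RB -> RB) (mu : {measure set RB -> \bar R})
  (K : set nat) (I : nat -> interval R) : Prop :=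
  exists alpha : nat -> R, (forall n, 0 <= alpha n) /\ alpha @ \oo --> 0 /\
    forall (l n : nat) (A B : set RB), sigmaAl T K I l A -> borel01 B ->
      (`| mu (A `&` preimg T (n + l) B) - mu A * mu B | <= (alpha n)%:E)%E.

Definition exact (T : RB -> RB) (mu : {measure set RB -> \bar R}) : Prop :=
  forall A : set RB, (forall n, exists B, borel01 B /\ A = preimg T n B) ->
    mu A = 0%E \/ mu A = 1%E.

End Defs.

From HB Require Import structures.
From mathcomp Require Import all_boot all_order all_algebra.
From mathcomp Require Import all_classical all_reals all_analysis.
Import Order.TTheory GRing.Theory Num.Theory.
Local Open Scope classical_set_scope.
Local Open Scope ring_scope.

(* A tail set A, i.e. A = T^{-n} B_n for every n, is independent of every
   D in sigma(A^l): by alpha-mixing |mu(D & T^{-(n+l)} B_{n+l}) - mu D mu A|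
   <= alpha n -> 0, using mu B_{n+l} = mu A by invariance.  Modulo the null
   set of points whose orbit leaves the union of the partition intervals,
   sigma(A^l) contains T^{-j} sigma(A) for every j < l; these sigma-algebras
   form an increasing family, so by the pi-lambda theorem A is independent of
   \bigvee_j T^{-j} sigma(A), which is the whole Borel sigma-algebra modulo
   lambda-null, hence mu-null, sets.  Thus A is independent of itself and
   mu A = mu A ^ 2. *)

Lemma eq0_cvg0_norm_le (R : realType) (alpha : nat -> R) (x : R) :
  alpha @ \oo --> 0 -> (forall n, `|x| <= alpha n) -> x = 0.
Proof.
move=> alpha0 x_le; apply: normr0_eq0; apply/eqP.
rewrite eq_le normr_ge0 andbT; apply/ler_addgt0Pr => e e0.
have [N _ /(_ N (leqnn N)) /= alphaN] := (cvgr0Pnorm_lt alpha).1 alpha0 _ e0.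
by rewrite add0r ltW // (le_lt_trans (x_le N)) // (le_lt_trans (ler_norm _)).
Qed.

Lemma sigma_algebra_bigcup_count {U : Type} {D : set U} {G : set (set U)}
    {J : countType} (P : set J) (F : J -> set U) :
  sigma_algebra D G -> (forall j, P j -> G (F j)) -> G (\bigcup_(j in P) F j).
Proof.
move=> [G0 _ GU] GF.
pose F' n := if unpickle n is Some j then (if pselect (P j) then F j else set0)
             else set0.
have -> : \bigcup_(j in P) F j = \bigcup_n F' n.
  apply/seteqP; split => [x [j Pj Fjx]|x [n _]].
    by exists (pickle j) => //; rewrite /F' pickleK; case: pselect.
  by rewrite /F'; case: unpickle => // j; case: pselect => // Pj; exists j.
apply: GU => n; rewrite /F'; case: unpickle => // j.
by case: pselect => [Pj|_] //; exact: GF.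
Qed.

Lemma sigma_algebra_pullback {U : Type} {D : set U} {f : U -> U}
    {G : set (set U)} : (forall x, D x -> D (f x)) -> sigma_algebra D G ->
  sigma_algebra D [set E | E `<=` D /\ G (D `&` f @^-1` E)].
Proof.
move=> fD [G0 GC GU]; split.
- by split => //; rewrite preimage_set0 setI0.
- move=> E [_ GE]; split; first exact: subDsetl.
  suff -> : D `&` f @^-1` (D `\` E) = D `\` (D `&` f @^-1` E) by exact: GC.
  by apply/seteqP; split => x /= [Dx]; [case=> _ nE; split => // -[]|
    move=> nfE; split => //; split; [exact: fD|move=> ?; exact: nfE]].
- move=> F GF; split; first by apply: bigcup_sub => n _; case: (GF n).
  by rewrite preimage_bigcup setI_bigcupr; apply: GU => n; case: (GF n).
Qed.

Section independence_mod_null_sets.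
Context {d : measure_display} {S : measurableType d} {R : realType}.
Variables (Om : set S) (mu : {measure set S -> \bar R}).
Hypotheses (mOm : measurable Om) (mu_Om : mu Om = 1%E).

Definition measurable_in : set (set S) := [set X | measurable X /\ X `<=` Om].

Lemma measurable_in_sigma_algebra : sigma_algebra Om measurable_in.
Proof.
split.
- by split => //; exact: measurable0.
- by move=> X [mX _]; split; [exact: measurableD|exact: subDsetl].
- move=> F mF; split; first by apply: bigcupT_measurable => n; case: (mF n).
  by apply: bigcup_sub => n _; case: (mF n).
Qed.

Lemma measurable_inI X Y : measurable_in X -> measurable_in Y ->
  measurable_in (X `&` Y).
Proof.
by move=> [mX XOm] [mY _]; split; [exact: measurableI|apply: subIset; left].
Qed.

Lemma measure_in_fin_num X : measurable_in X -> mu X \is a fin_num.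
Proof.
move=> [mX XOm]; rewrite ge0_fin_numE // (le_lt_trans _ (ltry 1)) // -mu_Om.
by rewrite le_measure // inE.
Qed.

Lemma measure_symdiff X Y : measurable X -> measurable Y ->
  mu.-negligible (X `+` Y) -> mu X = mu Y.
Proof.
move=> mX mY XY; rewrite (measureDI mu mX mY) (measureDI mu mY mX) setIC.
rewrite (measure_negligible (measurableD mX mY)); last first.
  by apply: negligibleS XY => x; left.
rewrite (measure_negligible (measurableD mY mX)) //.
by apply: negligibleS XY => x; right.
Qed.

Definition ae_closure (G : set (set S)) : set (set S) :=
  [set X | measurable_in X /\ exists2 D, G D & mu.-negligible (X `+` D)].

Lemma ae_closure_sigma_algebra G : G `<=` measurable_in ->
  sigma_algebra Om G -> sigma_algebra Om (ae_closure G).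
Proof.
move=> Gm [G0 GC GU]; have [m0 mC mU] := measurable_in_sigma_algebra.
split.
- by split => //; exists set0 => //; rewrite setYK; exact: negligible_set0.
- move=> X [mX [D GD XD]]; split; first exact: mC.
  exists (Om `\` D); first exact: GC.
  apply: negligibleS XD => x [] [[Ox nX] nD]; [right|left];
    by split => //; apply: contrapT => nY; apply: nD.
- move=> F mF; split; first by apply: mU => n; case: (mF n).
  have /choice[D FD] : forall n, exists D, G D /\ mu.-negligible (F n `+` D).
    by move=> n; have [_ [D]] := mF n; exists D.
  exists (\bigcup_n D n); first by apply: GU => n; case: (FD n).
  apply: negligibleS (negligible_bigcup (fun n => (FD n).2)).
  move=> x [] [[n _ Fx] nD]; exists n => //; [left|right];
    by split => // Dx; apply: nD; exists n.
Qed.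

Definition indep_with (A : set S) : set (set S) :=
  [set X | measurable_in X /\ mu (X `&` A) = (mu X * mu A)%E].

Variable A : set S.
Hypothesis mA : measurable_in A.

Lemma indep_with_symdiff X Y : indep_with A X -> measurable_in Y ->
  mu.-negligible (X `+` Y) -> indep_with A Y.
Proof.
move=> [[mX _] XA] [mY YOm] XY; split => //.
have [mA' _] := mA.
rewrite -(measure_symdiff _ _ mX mY XY) -XA; apply: measure_symdiff.
- exact: measurableI.
- exact: measurableI.
- by rewrite -setIYl setYC; apply: negligibleS XY; exact: subIsetl.
Qed.

Lemma ae_closure_indep_with G : G `<=` indep_with A ->
  ae_closure G `<=` indep_with A.
Proof.
move=> GA X [mX [D /GA DA XD]]; apply: indep_with_symdiff DA mX _.
by rewrite setYC.
Qed.

Lemma indep_with_lambda_system : lambda_system Om (indep_with A).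
Proof.
have [_ _ mU] := measurable_in_sigma_algebra.
have [mA' AOm] := mA.
split.
- by move=> X [[]].
- by split; [split|rewrite setIidr // mu_Om mul1e].
- move=> X Y YX [[mX XOm] XA] [[mY YOm] YA]; split.
    by split; [exact: measurableD|move=> x [/XOm]].
  have muD Z W : measurable_in Z -> measurable W ->
      mu (Z `\` W) = (mu Z - mu (Z `&` W))%E.
    move=> [mZ ZOm] mW; rewrite measureD // -ge0_fin_numE //.
    exact: measure_in_fin_num.
  rewrite setIDAC setIDA !muD //; last exact: measurable_inI.
  rewrite setIAC !(setIidr YX) XA YA muleBl //; first exact: measure_in_fin_num.
  by apply: fin_num_adde_defl; rewrite fin_numN measure_in_fin_num.
- move=> F ndF FA.
  have mF n : measurable (F n) by case: (FA n) => -[].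
  have FU : measurable_in (\bigcup_n F n) by apply: mU => n; case: (FA n).
  split => //.
  have FAcvg : (fun n => mu (F n `&` A)) @ \oo --> mu (\bigcup_n F n `&` A).
    rewrite setI_bigcupl; apply: nondecreasing_cvg_mu.
    - by move=> n; exact: measurableI.
    - by rewrite -setI_bigcupl; apply: measurableI => //; case: FU.
    - move=> m n mn; apply/subsetPset; apply: setSI.
      by apply/subsetPset; exact: ndF.
  apply: (cvg_unique _ FAcvg); first exact: ereal_hausdorff.
  rewrite (_ : (fun n => _) = (fun n => mu (F n) * mu A)%E); last first.
    by apply: funext => n; case: (FA n).
  apply: cvgeM; last exact: cvg_cst.
  - by apply: mule_def_fin; apply: measure_in_fin_num.
  - by apply: nondecreasing_cvg_mu => //; case: FU.
Qed.

Lemma indep_with_self : indep_with A A -> mu A = 0%E \/ mu A = 1%E.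
Proof.
move=> [_]; rewrite setIid -(fineK (measure_in_fin_num _ mA)) -EFinM.
move=> [] /eqP; rewrite -subr_eq0 -{1}(mulr1 (fine _)) -mulrBr mulf_eq0.
by rewrite subr_eq0; case/orP => /eqP ->; [left|right].
Qed.

End independence_mod_null_sets.

Lemma measure0_le_scaled {d : measure_display} {S : measurableType d}
    {R : realType} (mu nu : {measure set S -> \bar R}) (c : R) (X : set S) :
  0 < c -> ((c^-1)%:E * mu X <= nu X)%E -> nu X = 0%E -> mu X = 0%E.
Proof.
move=> c0 + nu0; rewrite nu0 pmule_rle0 ?lte_fin ?invr_gt0 // => mu_le0.
exact/le_anti/andP.
Qed.

Section mixing_implies_exactness.
Context {R : realType}.
Local Notation RB := (measurableTypeR R).
Local Notation X01 := (@I01 R).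
Context {T : RB -> RB} {mu : {measure set RB -> \bar R}}.
Context {K : set nat} {I : nat -> interval R}.
Hypotheses (T_I01 : forall x, X01 x -> X01 (T x)) (mT : measurable_fun X01 T).
Hypotheses (mu_I01 : mu X01 = 1%E)
  (mu_preimg1 : forall B, borel01 B -> mu (preimg T 1 B) = mu B).
Hypothesis I_I01 : forall k, K k -> [set` I k] `<=` X01.

Lemma measurable_I01 : measurable X01.
Proof.
rewrite (_ : X01 = `[0, 1]%classic); first exact: measurable_itv.
by apply/seteqP; split => x; rewrite /I01 /= in_itv.
Qed.

Lemma iter_I01 n x : X01 x -> X01 (iter n T x).
Proof. by elim: n => //= n IH /IH; exact: T_I01. Qed.

Lemma preimgS n B : preimg T n.+1 B = preimg T 1 (preimg T n B).
Proof.
apply/seteqP; split => x; rewrite /preimg /=.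
  move=> [I01x]; rewrite -iterS iterSr.
  by split => //; split => //; exact: T_I01.
by move=> [I01x [_ Bx]]; split => //; rewrite -iterS iterSr.
Qed.

Lemma measurable_preimg n B : measurable B -> measurable (preimg T n B).
Proof.
move=> mB; elim: n => [|n IH]; first exact: measurableI measurable_I01 mB.
by rewrite preimgS; exact: mT measurable_I01 _ IH.
Qed.

Lemma borel01_preimg n B : measurable B -> borel01 (preimg T n B).
Proof. by move=> mB; split; [exact: measurable_preimg|exact: subIsetl]. Qed.

Lemma measure_preimg n B : borel01 B -> mu (preimg T n B) = mu B.
Proof.
move=> [mB BI01]; elim: n => [|n IH]; first by rewrite /preimg /= setIidr.
by rewrite preimgS mu_preimg1 //; exact: borel01_preimg mB.
Qed.

Lemma sigmaAl_borel01 l : sigmaAl T K I l `<=` @borel01 R.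
Proof.
apply: smallest_sub; first exact: measurable_in_sigma_algebra measurable_I01.
move=> _ [w [_ ->]]; split; last exact: subIsetl.
apply: measurableI; first exact: measurable_I01.
by apply: bigcap_measurableType => j _; apply: measurable_preimg.
Qed.

Definition uncovered : set RB := X01 `\` \bigcup_(k in K) [set` I k].

Hypothesis mu_uncovered : mu uncovered = 0%E.

Lemma borel01_uncovered : borel01 uncovered.
Proof.
split; last exact: subDsetl.
apply: measurableD; first exact: measurable_I01.
by apply: bigcup_measurable => k _; exact: measurable_itv.
Qed.

Lemma negligible_preimg_uncovered :
  mu.-negligible (\bigcup_i preimg T i uncovered).
Proof.
apply: negligible_bigcup => i.
apply/negligibleP; first exact: measurable_preimg borel01_uncovered.1.
exact: etrans (measure_preimg _ _ borel01_uncovered) mu_uncovered.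
Qed.

Lemma orbit_covered x : X01 x -> ~ (\bigcup_i preimg T i uncovered) x ->
  forall i, exists2 k, K k & [set` I k] (iter i T x).
Proof.
move=> I01x xcov i; apply: contrapT => /forall2NP nI.
apply: xcov; exists i => //; split => //; split; first exact: iter_I01.
by move=> [k Kk Ik]; case: (nI k).
Qed.

Lemma preimg_interval_ae l j k : (j < l)%N -> K k ->
  ae_closure X01 mu (sigmaAl T K I l) (preimg T j [set` I k]).
Proof.
move=> jl Kk.
(* D is the union of the l-cylinders whose j-th interval is [I k]; it misses
   only points of [preimg T j [set` I k]] whose orbit meets [uncovered]. *)
pose W := [set s : seq nat |
  (forall i, (i < l)%N -> K (nth 0 s i)) /\ nth 0 s j = k].
pose D := \bigcup_(s in W)
  (X01 `&` \bigcap_(i in `I_l) preimg T i [set` I (nth 0 s i)]).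
split; first by apply: borel01_preimg; exact: measurable_itv.
exists D.
  apply: sigma_algebra_bigcup_count => [|s [sK _]].
    exact: smallest_sigma_algebra.
  by apply: sub_sigma_algebra; exists (nth 0 s).
apply: negligibleS negligible_preimg_uncovered => x [[Px nDx]|]; last first.
  by move=> [[s [_ <-] [_ sx]] nPx]; exfalso; apply: nPx; exact: sx.
apply: contrapT => /(orbit_covered _ Px.1) cov.
pose w i := if i == j then k else s2val (cid2 (cov i)).
apply: nDx; exists (mkseq w l).
  split; last by rewrite nth_mkseq // /w eqxx.
  by move=> i il; rewrite nth_mkseq // /w; case: eqP => // _; exact: s2valP.
split; first exact: Px.1.
move=> i /= il; rewrite nth_mkseq // /w; case: eqP => [->|_]; first exact: Px.
by split; [exact: Px.1|exact: (s2valP' (cid2 (cov i)))].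
Qed.

Lemma preimg_sigmaA_ae l j E : (j < l)%N -> sigmaA K I E ->
  ae_closure X01 mu (sigmaAl T K I l) (preimg T j E).
Proof.
move=> jl sE; have aeS := ae_closure_sigma_algebra X01 mu measurable_I01 _
  (sigmaAl_borel01 l) (smallest_sigma_algebra _ _).
suff [] : [set E | E `<=` X01 /\
  ae_closure X01 mu (sigmaAl T K I l) (X01 `&` iter j T @^-1` E)] E by [].
apply: smallest_sub (sigma_algebra_pullback (iter_I01 j) aeS) _ _ sE.
by move=> _ [k Kk <-]; split; [exact: I_I01|exact: preimg_interval_ae].
Qed.

Lemma sigmaA_borel01 : sigmaA K I `<=` @borel01 R.
Proof.
apply: smallest_sub; first exact: measurable_in_sigma_algebra measurable_I01.
by move=> _ [k Kk <-]; split; [exact: measurable_itv|exact: I_I01].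
Qed.

Lemma join_all_borel01 : join_all T K I `<=` @borel01 R.
Proof.
apply: smallest_sub; first exact: measurable_in_sigma_algebra measurable_I01.
by move=> _ [j _ [E /sigmaA_borel01 [mE _] <-]]; exact: borel01_preimg.
Qed.

Definition finite_join l :=
  <<s X01, \bigcup_(j in `I_l) preimg T j @` sigmaA K I >>.

Lemma finite_join_ae l :
  finite_join l `<=` ae_closure X01 mu (sigmaAl T K I l).
Proof.
apply: smallest_sub.
  exact: ae_closure_sigma_algebra measurable_I01 _ (sigmaAl_borel01 l)
    (smallest_sigma_algebra _ _).
by move=> _ [j jl [E sE <-]]; exact: preimg_sigmaA_ae.
Qed.

Lemma finite_join_le l l' : (l <= l')%N -> finite_join l `<=` finite_join l'.
Proof.
move=> ll'; apply: sub_sigma_algebra2 => _ [j jl [E sE <-]].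
by exists j; [exact: leq_trans ll'|exists E].
Qed.

Lemma setI_closed_finite_joins : setI_closed (\bigcup_l finite_join l).
Proof.
move=> X Y [l _ Xl] [l' _ Yl']; exists (maxn l l') => //.
have /sigma_algebraP[] // := @smallest_sigma_algebra _ X01
  (\bigcup_(j in `I_(maxn l l')) preimg T j @` sigmaA K I).
  by move=> Z /finite_join_ae [[]].
move=> _ _ _; apply.
- exact: finite_join_le (leq_maxl l l') _ Xl.
- exact: finite_join_le (leq_maxr l l') _ Yl'.
Qed.

Lemma join_all_sub_finite_joins :
  join_all T K I `<=` <<s X01, \bigcup_l finite_join l >>.
Proof.
apply: smallest_sub => // _ [j _ [E sE <-]]; apply: sub_sigma_algebra.
exists j.+1 => //; apply: sub_sigma_algebra.
by exists j => /=; [exact: ltnSn|exists E].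
Qed.

Section tail_set.
Context {A : set RB}.
Hypothesis A_tail : forall n, exists B, borel01 B /\ A = preimg T n B.

Lemma tail_borel01 : borel01 A.
Proof. by have [B [[mB _] ->]] := A_tail 0; exact: borel01_preimg. Qed.

Context {alpha : nat -> R}.
Hypotheses (alpha0 : alpha @ \oo --> 0) (mixing : forall l n D B,
  sigmaAl T K I l D -> borel01 B ->
  (`| mu (D `&` preimg T (n + l) B) - mu D * mu B | <= (alpha n)%:E)%E).

Lemma sigmaAl_indep_tail l : sigmaAl T K I l `<=` indep_with X01 mu A.
Proof.
move=> D sD; have bD := sigmaAl_borel01 _ _ sD; split => //.
have mix n : (`| mu (D `&` A) - mu D * mu A | <= (alpha n)%:E)%E.
  have [B [bB AB]] := A_tail (n + l).
  by rewrite AB measure_preimg //; exact: mixing.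
have finI01 := measure_in_fin_num _ _ measurable_I01 mu_I01.
move: mix (finI01 _ (measurable_inI _ _ _ bD tail_borel01)).
move: (finI01 _ bD) (finI01 _ tail_borel01).
case: (mu (D `&` A)) => // c; case: (mu D) => // b; case: (mu A) => // a.
move=> _ _ mix _; rewrite -EFinM; congr EFin; apply/eqP; rewrite -subr_eq0.
by apply/eqP/(@eq0_cvg0_norm_le R alpha) => // n; rewrite -lee_fin.
Qed.

Lemma join_all_indep_tail : join_all T K I `<=` indep_with X01 mu A.
Proof.
apply: subset_trans join_all_sub_finite_joins _.
apply: lambda_system_subset.
- exact: setI_closed_finite_joins.
- exact: indep_with_lambda_system _ _ measurable_I01 mu_I01 _ tail_borel01.
- move=> X [l _ /finite_join_ae]; apply: ae_closure_indep_with.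
    exact: tail_borel01.
  exact: sigmaAl_indep_tail.
- move=> X sX; suff [] : borel01 X by [].
  apply: smallest_sub (measurable_in_sigma_algebra _ measurable_I01) _ _ sX.
  by move=> Y [l _ /finite_join_ae []].
Qed.

Lemma tail_measure01 :
  (exists2 C, join_all T K I C & mu.-negligible (A `+` C)) ->
  mu A = 0%E \/ mu A = 1%E.
Proof.
move=> [C jC AC].
apply: (indep_with_self _ _ measurable_I01 mu_I01 _ tail_borel01).
apply: (indep_with_symdiff _ _ _ tail_borel01 _ _ (join_all_indep_tail _ jC)).
  exact: tail_borel01.
by rewrite setYC.
Qed.

End tail_set.

End mixing_implies_exactness.

Theorem theorem3p6 (R : realType) (T : measurableTypeR R -> measurableTypeR R)
  (mu : {measure set (measurableTypeR R) -> \bar R})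
  (K : set nat) (I : nat -> interval R) :
  in_classT T mu K I -> alpha_mixing T mu K I -> exact T mu.
Proof.
move=> [[mu_I01 _] [c [c1 mu_lebesgue]] [T_I01 mT mu_preimg1 _]
  [I_I01 _ _ lebesgue_uncovered] [_ generating _]].
move=> [alpha [_ [alpha0 mixing]]] A A_tail.
have lebesgue0_mu0 B : borel01 B -> lebesgue_measure B = 0%E -> mu B = 0%E.
  by move=> /mu_lebesgue[+ _]; apply: measure0_le_scaled; exact: lt_le_trans c1.
apply: (tail_measure01 T_I01 mT mu_I01 mu_preimg1 I_I01 _ A_tail alpha0 mixing).
  exact: lebesgue0_mu0 borel01_uncovered lebesgue_uncovered.
have [mA AI01] := tail_borel01 T_I01 mT A_tail.
have [C [jC AC]] := generating A (conj mA AI01).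
have [mC CI01] := join_all_borel01 T_I01 mT I_I01 _ jC.
have bAC : borel01 (A `+` C).
  split; first by apply: measurableU; exact: measurableD.
  by move=> x [[/AI01]|[/CI01]].
exists C => //; apply/negligibleP; [exact: bAC.1|exact: lebesgue0_mu0 bAC AC].
Qed.
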